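(* Let $X\in\mathbb{R}^{n\times p}$, $\mathbf y\in\mathbb{R}^n$ with $\mathbf y\ne\mathbf 0$, and $\|X^T\mathbf y\|_\infty>\lambda_1>0$. Suppose $\boldsymbol\theta_1^*\ne\frac{\mathbf y}{\|X^T\mathbf y\|_\infty}$, and let $\mathbf a=\frac{\mathbf y}{\lambda_1}-\boldsymbol\theta_1^*$. For $\lambda\in(0,\lambda_1]$ define $$f(\lambda)=\frac{\langle\frac{\mathbf y}{\lambda}-\boldsymbol\theta_1^*,\mathbf a\rangle}{\|\frac{\mathbf y}{\lambda}-\boldsymbol\theta_1^*\|_2},\qquad g(\lambda)=\frac{\langle\frac{\mathbf y}{\lambda}-\boldsymbol\theta_1^*,\mathbf y\rangle}{\|\frac{\mathbf y}{\lambda}-\boldsymbol\theta_1^*\|_2}.$$ Then $f$ is strictly increasing on $(0,\lambda_1]$ and $g$ is strictly decreasing on $(0,\lambda_1]$.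
   Context: Let $F=\{\boldsymbol\theta\in\mathbb{R}^n:\|X^T\boldsymbol\theta\|_\infty\le 1\}$. For $\lambda>0$, the Lasso dual optimum $\boldsymbol\theta^*(\lambda)$ is the unique minimizer of $\frac12\|\boldsymbol\theta-\mathbf y/\lambda\|_2^2$ over $\boldsymbol\theta\in F$, i.e. the Euclidean projection of $\mathbf y/\lambda$ onto $F$. Write $\boldsymbol\theta_1^*=\boldsymbol\theta^*(\lambda_1)$. *)

(* real closed field R (generalizes the reals; statement is algebraic). *)
From HB Require Import structures.
From mathcomp Require Import all_boot all_order all_algebra.
Set Implicit Arguments. Unset Strict Implicit. Unset Printing Implicit Defensive.
Import Order.TTheory GRing.Theory Num.Theory.
Local Open Scope ring_scope.

Definition dotv (R : rcfType) (n : nat) (u v : 'cV[R]_n) : R :=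
  \sum_(i < n) u i 0 * v i 0.

Definition norm2 (R : rcfType) (n : nat) (u : 'cV[R]_n) : R :=
  Num.sqrt (dotv u u).

(* sup norm ||u||_inf (= 0 for the empty vector) *)
Definition norminf (R : rcfType) (n : nat) (u : 'cV[R]_n) : R :=
  \big[Num.max/0]_(i < n) `|u i 0|.

Definition inF (R : rcfType) (n p : nat) (X : 'M[R]_(n, p)) (th : 'cV[R]_n) : Prop :=
  norminf (X^T *m th) <= 1.

Definition is_proj_F (R : rcfType) (n p : nat) (X : 'M[R]_(n, p))
  (v th : 'cV[R]_n) : Prop :=
  inF X th /\ forall th' : 'cV[R]_n, inF X th' ->
    norm2 (th - v) ^+ 2 / 2 <= norm2 (th' - v) ^+ 2 / 2.

(* Lasso dual optimum theta*(lambda): projection of y/lambda onto F *)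
Definition is_dual_opt (R : rcfType) (n p : nat) (X : 'M[R]_(n, p))
  (y : 'cV[R]_n) (lam : R) (th : 'cV[R]_n) : Prop :=
  is_proj_F X (lam^-1 *: y) th.

From mathcomp Require Import all_boot all_order all_algebra.
From mathcomp Require Import ring lra.
Import Order.TTheory GRing.Theory Num.Theory.
Set Implicit Arguments. Unset Strict Implicit. Unset Printing Implicit Defensive.
Local Open Scope ring_scope.

(* Write t1 = 1/lam1 and a = y/lam1 - th1.  For lam in (0, lam1]
   we have y/lam - th1 = a + s y with s = 1/lam - t1 >= 0, and s decreases
   strictly as lam increases.  With A = <a,a>, B = <a,y>, Y = <y,y> and
   q(s) = |a + s y|^2 = A + 2sB + s^2 Y, the two quotients become
     f = (A + sB) / sqrt q(s),      g = (B + sY) / sqrt q(s).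
   Everything hinges on the Gram determinant D = AY - B^2 being positive,
   i.e. on a not being parallel to y; this follows from the optimality of
   th1: a dual optimum on the line through y must be y/||X^T y||_inf,
   which is excluded by hypothesis.  Given D > 0, the identities
     Y q(s) = (B + sY)^2 + D,        A q(s) = (A + sB)^2 + s^2 D
   express g(s) = sqrt Y * c(B + sY) and, for s > 0, f(s) = sqrt A * c(A/s + B),
   where c(x) = x / sqrt(x^2 + D) is strictly increasing and below 1.
   Hence g increases with s and f decreases with s, and the theorem follows.
   The file develops: the monotone ratio c, the scalar profiles of f and g,
   the inner-product algebra, the non-parallelism of a and y, and lemma5. *)

Section CosRatio.
Variables (R : rcfType) (D : R).
Hypothesis D_gt0 : 0 < D.

Definition cos_ratio (x : R) : R := x / Num.sqrt (x ^+ 2 + D).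

Let radicand_gt0 x : 0 < x ^+ 2 + D.
Proof. by rewrite ltr_wpDl ?sqr_ge0. Qed.

Lemma cos_ratio_lt1 x : cos_ratio x < 1.
Proof.
rewrite /cos_ratio ltr_pdivrMr ?sqrtr_gt0 // mul1r.
apply: (le_lt_trans (ler_norm x)); rewrite -sqrtr_sqr ltr_sqrt //.
by rewrite ltrDl.
Qed.

(* The heart of the monotonicity: comparing squares, since
   (x' N)^2 - (x N')^2 = D (x'^2 - x^2) with N, N' the two radicals. *)
Lemma cos_ratio_incr x x' : x < x' -> cos_ratio x < cos_ratio x'.
Proof.
move=> lt_xx'; rewrite /cos_ratio.
have N2 := sqr_sqrtr (ltW (radicand_gt0 x)).
have N2' := sqr_sqrtr (ltW (radicand_gt0 x')).
have N0 : 0 < Num.sqrt (x ^+ 2 + D) by rewrite sqrtr_gt0.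
have N0' : 0 < Num.sqrt (x' ^+ 2 + D) by rewrite sqrtr_gt0.
rewrite ltr_pdivrMr // mulrAC ltr_pdivlMr //.
set N := Num.sqrt _ in N0 N2 *; set N' := Num.sqrt _ in N0' N2' *.
have key : (x' * N) ^+ 2 - (x * N') ^+ 2 = D * (x' ^+ 2 - x ^+ 2).
  by rewrite !exprMn N2 N2'; ring.
have [x_ge0 | x_lt0] := leP 0 x.
  have x'_gt0 : 0 < x' by apply: le_lt_trans lt_xx'.
  rewrite -ltr_sqr ?nnegrE ?mulr_ge0 ?(ltW x'_gt0) ?(ltW N0) ?(ltW N0') //.
  by rewrite -subr_gt0 key mulr_gt0 // subr_gt0; nra.
have [x'_le0 | x'_gt0] := leP x' 0.
  rewrite -ltrN2 -!mulNr -ltr_sqr ?nnegrE ?mulr_ge0 ?oppr_ge0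
    ?(ltW x_lt0) ?(ltW N0) ?(ltW N0') // !exprMn !sqrrN -!exprMn.
  by rewrite -subr_gt0 -opprB key -mulrN mulr_gt0 // oppr_gt0 subr_lt0; nra.
by apply: (@lt_trans _ _ 0); [rewrite pmulr_llt0 | rewrite mulr_gt0].
Qed.

Lemma cos_ratio_homog s p :
  0 < s -> p / Num.sqrt (p ^+ 2 + s ^+ 2 * D) = cos_ratio (p / s).
Proof.
move=> s_gt0; rewrite /cos_ratio.
have -> : p ^+ 2 + s ^+ 2 * D = s ^+ 2 * ((p / s) ^+ 2 + D).
  by field; rewrite gt_eqF.
rewrite sqrtrM ?sqr_ge0 // sqrtr_sqr gtr0_norm //.
by field; rewrite !gt_eqF ?sqrtr_gt0.
Qed.
End CosRatio.

Lemma div_sqrt_scale (R : rcfType) (k p q : R) :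
  0 < k -> 0 < q -> p / Num.sqrt q = Num.sqrt k * (p / Num.sqrt (k * q)).
Proof.
move=> k_gt0 q_gt0; rewrite sqrtrM ?ltW //.
by field; rewrite !gt_eqF ?sqrtr_gt0.
Qed.

Section RayProfiles.
Variables (R : rcfType) (A B Y : R).
Hypothesis gram_gt0 : 0 < A * Y - B ^+ 2.

(* q(s) = A + 2sB + s^2 Y, the squared norm of a + s y when A = <a,a>,
   B = <a,y>, Y = <y,y>. *)
Definition ray_quad (s : R) : R := A + 2 * s * B + s ^+ 2 * Y.

Lemma ray_quad_gt0 s : 0 < Y -> 0 < ray_quad s.
Proof.
move=> Y_gt0; rewrite -(pmulr_rgt0 _ Y_gt0).
have -> : Y * ray_quad s = (B + s * Y) ^+ 2 + (A * Y - B ^+ 2)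
  by rewrite /ray_quad; ring.
by rewrite ltr_wpDl ?sqr_ge0.
Qed.

(* g along the ray: (B + sY)/sqrt q(s) = sqrt Y * c(B + sY), increasing in s. *)
Lemma ray_profile_g_incr s1 s2 : 0 < Y -> s1 < s2 ->
  (B + s1 * Y) / Num.sqrt (ray_quad s1) < (B + s2 * Y) / Num.sqrt (ray_quad s2).
Proof.
move=> Y_gt0 lt_s12.
have profile s : (B + s * Y) / Num.sqrt (ray_quad s)
    = Num.sqrt Y * cos_ratio (A * Y - B ^+ 2) (B + s * Y).
  rewrite (div_sqrt_scale _ Y_gt0 (ray_quad_gt0 s Y_gt0)) /cos_ratio.
  by congr (_ * (_ / Num.sqrt _)); rewrite /ray_quad; ring.
rewrite !profile ltr_pM2l ?sqrtr_gt0 //.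
by apply: cos_ratio_incr => //; rewrite ltrD2l ltr_pM2r.
Qed.

(* f along the ray: (A + sB)/sqrt q(s) equals sqrt A at s = 0 and
   sqrt A * c(A/s + B) for s > 0, hence decreases on s >= 0. *)
Lemma ray_profile_f_decr s1 s2 : 0 < A -> 0 <= s1 -> s1 < s2 ->
  (A + s2 * B) / Num.sqrt (ray_quad s2) < (A + s1 * B) / Num.sqrt (ray_quad s1).
Proof.
move=> A_gt0 s1_ge0 lt_s12.
have Y_gt0 : 0 < Y.
  by rewrite -(pmulr_rgt0 _ A_gt0); apply: lt_le_trans gram_gt0 _; rewrite gerDl oppr_le0 sqr_ge0.
have profile s : 0 < s -> (A + s * B) / Num.sqrt (ray_quad s)
    = Num.sqrt A * cos_ratio (A * Y - B ^+ 2) ((A + s * B) / s).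
  move=> s_gt0; rewrite (div_sqrt_scale _ A_gt0 (ray_quad_gt0 s Y_gt0)).
  rewrite -cos_ratio_homog //; congr (_ * (_ / Num.sqrt _)).
  by rewrite /ray_quad; ring.
have s2_gt0 : 0 < s2 by apply: le_lt_trans lt_s12.
rewrite profile //; have [-> | s1_neq0] := eqVneq s1 0.
  rewrite /ray_quad expr0n /= !(mul0r, mulr0, addr0).
  have -> : A / Num.sqrt A = Num.sqrt A.
    by rewrite -{1}(sqr_sqrtr (ltW A_gt0)) expr2 mulfK // gt_eqF ?sqrtr_gt0.
  by rewrite gtr_pMr ?sqrtr_gt0 // cos_ratio_lt1.
have s1_gt0 : 0 < s1 by rewrite lt_def s1_neq0.
rewrite profile // ltr_pM2l ?sqrtr_gt0 //; apply: cos_ratio_incr => //.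
have split s : 0 < s -> (A + s * B) / s = A / s + B.
  by move=> s_gt0; field; rewrite gt_eqF.
by rewrite !split // ltrD2r ltr_pM2l // ltf_pV2.
Qed.
End RayProfiles.

Section InnerProduct.
Variables (R : rcfType) (n : nat).
Implicit Types (u v w : 'cV[R]_n).

Lemma dotvC u v : dotv u v = dotv v u.
Proof. by apply: eq_bigr => i _; rewrite mulrC. Qed.

Lemma dotvDl u v w : dotv (u + v) w = dotv u w + dotv v w.
Proof. by rewrite /dotv -big_split; apply: eq_bigr => i _; rewrite mxE mulrDl. Qed.

Lemma dotvZl k u w : dotv (k *: u) w = k * dotv u w.
Proof. by rewrite /dotv mulr_sumr; apply: eq_bigr => i _; rewrite mxE mulrA. Qed.

Lemma dotvZZ k u : dotv (k *: u) (k *: u) = k ^+ 2 * dotv u u.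
Proof. by rewrite dotvZl dotvC dotvZl mulrA -expr2. Qed.

Lemma dotv_ge0 u : 0 <= dotv u u.
Proof. by apply: sumr_ge0 => i _; rewrite -expr2 sqr_ge0. Qed.

Lemma dotv_gt0 u : u != 0 -> 0 < dotv u u.
Proof.
apply: contraNT; rewrite -leNgt => u_le0; apply/eqP/matrixP => i j.
have : dotv u u == 0 by rewrite eq_le u_le0 dotv_ge0.
rewrite psumr_eq0 => [/allP/(_ i (mem_index_enum i))|k _]; last first.
  by rewrite -expr2 sqr_ge0.
by rewrite (ord1 j) -expr2 sqrf_eq0 mxE => /eqP.
Qed.

Lemma norm2_sq u : norm2 u ^+ 2 = dotv u u.
Proof. by rewrite /norm2 sqr_sqrtr // dotv_ge0. Qed.

Lemma dotv_ray_ray u v s :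
  dotv (u + s *: v) (u + s *: v) = ray_quad (dotv u u) (dotv u v) (dotv v v) s.
Proof.
rewrite /ray_quad !dotvDl !dotvZl [dotv u _]dotvC [dotv v _]dotvC.
by rewrite !dotvDl !dotvZl (dotvC v u); ring.
Qed.

Lemma dotv_ray_l u v s : dotv (u + s *: v) u = dotv u u + s * dotv u v.
Proof. by rewrite dotvDl dotvZl dotvC. Qed.

Lemma dotv_ray_r u v s : dotv (u + s *: v) v = dotv u v + s * dotv v v.
Proof. by rewrite dotvDl dotvZl. Qed.

(* The witness is the orthogonal projection
   coefficient c = <u,v>/<v,v>, for which |u - c v|^2 = D / <v,v>. *)
Lemma gram_det_gt0 u v : v != 0 -> (forall c, u != c *: v) ->
  0 < dotv u u * dotv v v - dotv u v ^+ 2.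
Proof.
move=> v_neq0 off_line; have Y_gt0 := dotv_gt0 v_neq0.
pose c := dotv u v / dotv v v.
have residual : dotv (u + (- c) *: v) (u + (- c) *: v)
    = (dotv u u * dotv v v - dotv u v ^+ 2) / dotv v v.
  by rewrite dotv_ray_ray /ray_quad /c; field; rewrite gt_eqF.
have residual_gt0 : 0 < dotv (u + (- c) *: v) (u + (- c) *: v).
  by apply: dotv_gt0; rewrite scaleNr subr_eq0 off_line.
by move: residual_gt0; rewrite residual pmulr_lgt0 // invr_gt0.
Qed.
End InnerProduct.

Lemma norminfZ (R : rcfType) (n : nat) (k : R) (v : 'cV[R]_n) : 0 <= k ->
  norminf (k *: v) = k * norminf v.
Proof.
move=> k_ge0; rewrite /norminf.
rewrite (big_morph (fun x => k * x) (fun x x' => maxr_pMr x x' k_ge0) (mulr0 k)).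
by apply: eq_bigr => i _; rewrite mxE normrM ger0_norm.
Qed.

(* A dual optimum for lam1 < ||X^T y||_inf that lies on the line through y
   must be y / ||X^T y||_inf: points c y beyond it are infeasible, and
   points before it are farther from y / lam1 than the feasible point
   y / ||X^T y||_inf itself. *)
Lemma dual_opt_off_line (R : rcfType) (n p : nat) (X : 'M[R]_(n, p))
    (y : 'cV[R]_n) (lam1 : R) (th1 : 'cV[R]_n) :
  y != 0 -> 0 < lam1 -> lam1 < norminf (X^T *m y) -> is_dual_opt X y lam1 th1 ->
  th1 != (norminf (X^T *m y))^-1 *: y -> forall c, th1 != c *: y.
Proof.
move=> y_neq0 lam1_gt0 lam1_lt [th1_feas th1_min] th1_neq c; apply/eqP => th1E.
set lm := norminf (X^T *m y) in lam1_lt th1_neq.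
have lm_gt0 : 0 < lm by apply: lt_trans lam1_lt.
have norminf_ray k : 0 <= k -> norminf (X^T *m (k *: y)) = k * lm.
  by move=> k_ge0; rewrite -scalemxAr norminfZ.
have dist2_ray k : norm2 (k *: y - lam1^-1 *: y) ^+ 2 = (k - lam1^-1) ^+ 2 * dotv y y.
  by rewrite norm2_sq -scalerBl dotvZZ.
have lt_lm_lam1 : lm^-1 < lam1^-1 by rewrite ltf_pV2.
have Y_gt0 := dotv_gt0 y_neq0.
have [c_lt | c_gt | c_eq] := ltgtP c lm^-1; last by rewrite th1E c_eq eqxx in th1_neq.
- have center_feas : inF X (lm^-1 *: y).
    by rewrite /inF norminf_ray ?invr_ge0 ?(ltW lm_gt0) // mulVf ?gt_eqF.
  have := th1_min _ center_feas; rewrite th1E !dist2_ray.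
  by apply/negP; rewrite -ltNge ltr_pM2r ?invr_gt0 // ltr_pM2r //; nra.
- have c_ge0 : 0 <= c by apply/ltW/(le_lt_trans _ c_gt); rewrite invr_ge0 ltW.
  move: th1_feas; rewrite /inF th1E norminf_ray //.
  by move: c_gt; rewrite -(ltr_pM2r lm_gt0) mulVf ?gt_eqF // ltNge => /negP.
Qed.

Theorem lemma5 (R : rcfType) (n p : nat) (X : 'M[R]_(n, p)) (y : 'cV[R]_n)
  (lam1 : R) (th1 : 'cV[R]_n) :
  y != 0 ->
  0 < lam1 -> lam1 < norminf (X^T *m y) ->
  is_dual_opt X y lam1 th1 ->
  th1 != (norminf (X^T *m y))^-1 *: y ->
  let a := lam1^-1 *: y - th1 in
  let f := fun lam : R =>
    dotv (lam^-1 *: y - th1) a / norm2 (lam^-1 *: y - th1) in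
  let g := fun lam : R =>
    dotv (lam^-1 *: y - th1) y / norm2 (lam^-1 *: y - th1) in
  (forall l l' : R, 0 < l -> l < l' -> l' <= lam1 -> f l < f l') /\
  (forall l l' : R, 0 < l -> l < l' -> l' <= lam1 -> g l' < g l).
Proof.
move=> y_neq0 lam1_gt0 lam1_lt th1_opt th1_neq a f g.
have a_off_line c : a != c *: y.
  apply: contra (dual_opt_off_line y_neq0 lam1_gt0 lam1_lt th1_opt th1_neq (lam1^-1 - c)).
  by move=> /eqP aE; rewrite scalerBl -aE /a opprB addrCA subrr addr0.
have D_gt0 := gram_det_gt0 y_neq0 a_off_line.
have A_gt0 : 0 < dotv a a by apply: dotv_gt0; rewrite -(scale0r y) a_off_line.
have on_ray l : l^-1 *: y - th1 = a + (l^-1 - lam1^-1) *: y.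
  by rewrite /a scalerBl [RHS]addrC addrA subrK.
have reparam l l' : 0 < l -> l < l' -> l' <= lam1 ->
    0 <= l'^-1 - lam1^-1 /\ l'^-1 - lam1^-1 < l^-1 - lam1^-1.
  move=> l_gt0 lt_ll' le_l'lam1; have l'_gt0 := lt_trans l_gt0 lt_ll'.
  by rewrite subr_ge0 lef_pV2 // ltrD2r ltf_pV2.
split=> l l' l_gt0 lt_ll' le_l'lam1; have [s'_ge0 lt_s] := reparam _ _ l_gt0 lt_ll' le_l'lam1.
- rewrite /f /norm2 !on_ray !dotv_ray_ray !dotv_ray_l.
  exact: ray_profile_f_decr.
- rewrite /g /norm2 !on_ray !dotv_ray_ray !dotv_ray_r.
  exact: ray_profile_g_incr (dotv_gt0 y_neq0) lt_s.
Qed.
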